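(* Let $q\ge2$, $d\ge2$, $P\ge1$ and $n\ge1$ be integers, and let $p$ be the smallest prime with $p\ge\max\{P,q\}$. Set $p_0=(d-1)(q-1)+1$ and $p_i=p$ for $i\in[1,d-2]$. Let $a_0\in[0,p_0-1]$ and $a_i\in[0,p_i-1]$ for $i\in[1,d-2]$, and define $$\mathcal{C}_{q,d,P}=\{\boldsymbol{x}\in\Sigma_q^n:\ \mathrm{VT}^{(i)}(\boldsymbol{x})\equiv a_i\pmod{p_i}\ \text{for all } i\in[0,d-2]\}.$$ Then for any two distinct $\boldsymbol{x},\boldsymbol{y}\in\mathcal{C}_{q,d,P}$, if the difference between the largest and the smallest index at which $\boldsymbol{x}$ and $\boldsymbol{y}$ differ is less than $P$, then $d_H(\boldsymbol{x},\boldsymbol{y})\ge d$. Moreover, there exists a choice of $a_0,\dots,a_{d-2}$ such that $r(\mathcal{C}_{q,d,P})\le(d-2)\log_q(2\max\{P,q\})+\log_q((d-1)(q-1)+1)$.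
   Context: $\Sigma_q=\{0,\dots,q-1\}$; $[i,j]=\{i,\dots,j\}$. For $\boldsymbol{x}\in\Sigma_q^n$, $x[i]$ is its $i$-th entry and $\mathrm{VT}^{(k)}(\boldsymbol{x})=\sum_{i=1}^n i^kx[i]$ (integer). $d_H$ is Hamming distance. Redundancy: $r(\mathcal{C})=n-\log_q|\mathcal{C}|$. *)

From mathcomp Require Import all_boot.
From Stdlib Require Import Reals.

Set Implicit Arguments.
Unset Strict Implicit.
Unset Printing Implicit Defensive.

(* Words of length n over Sigma_q = {0,..,q-1}; position i : 'I_n is the
   paper's index i+1 (paper indices are 1..n). *)
Definition word (q n : nat) := {ffun 'I_n -> 'I_q}.

Definition VT (q n : nat) (k : nat) (x : word q n) : nat :=
  \sum_(i < n) (i.+1) ^ k * (x i : nat).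

Definition dH (q n : nat) (x y : word q n) : nat := #|[set i | x i != y i]|.

(* largest differing index minus smallest differing index
   (meaningful when x != y; the shift by 1 cancels) *)
Definition diff_span (q n : nat) (x y : word q n) : nat :=
  (\max_(i < n | x i != y i) (i : nat)) - (\big[minn/n]_(i < n | x i != y i) (i : nat)).

Definition modulus (q d p : nat) (i : nat) : nat :=
  if i == 0 then (d - 1) * (q - 1) + 1 else p.

Definition code (q d p n : nat) (a : nat -> nat) : {set word q n} :=
  [set x : word q n | [forall i : 'I_(d - 1),
      VT i x == a i %[mod modulus q d p i]]].

Definition logb (b x : R) : R := (ln x / ln b)%R.

Definition redundancy (q n : nat) (C : {set word q n}) : R :=
  (INR n - logb (INR q) (INR #|C|))%R.

Arguments code : clear implicits.
Arguments redundancy : clear implicits.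

From Stdlib Require Import Reals Lra.
From mathcomp Require Import all_boot all_order all_algebra zify.

Set Implicit Arguments.
Unset Strict Implicit.
Unset Printing Implicit Defensive.

Import GRing.Theory.

(* If d_H(x, y) < d, then |VT^(0)(x) - VT^(0)(y)| <= (d - 1)(q - 1) < p_0, so the
   congruence modulo p_0 is an equality, and the difference e = x - y, read in F_p, has
   vanishing moments sum_i (i + 1)^j e_i for all j <= d - 2.  The at most d - 1 positions
   of its support are distinct modulo p, so the Vandermonde system forces e = 0.
   For the redundancy, the q^n words fall into p_0 p^(d-2) residue classes, one of which
   is therefore large, and Bertrand's postulate bounds p by 2 max(P, q). *)

(** * Bertrand's postulate *)

Lemma binS_le_exp2 m i : 'C(m.+1, i) <= 2 ^ m.
Proof.
elim: m i => [|m IHm] [|i] //; first by case: i.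
  by rewrite bin0 expn_gt0.
by rewrite binS expnS mul2n -addnn leq_add.
Qed.

Lemma bin_odd_le_exp4 k : 'C(k.*2.+1, k) <= 4 ^ k.
Proof.
have sym : 'C(k.*2.+1, k.+1) = 'C(k.*2.+1, k).
  by rewrite -bin_sub; [congr 'C(_, _); lia | lia].
have := binS_le_exp2 k.*2.+1 k.+1.
rewrite binS sym addnn expnS -mul2n leq_mul2l /=.
by rewrite -mul2n expnM.
Qed.

Lemma leq_binS m i : i.*2 < m -> 'C(m, i) <= 'C(m, i.+1).
Proof.
move=> lt_m; rewrite -(@leq_pmul2l i.+1) // mul_bin_left leq_mul2r.
by apply/orP; right; lia.
Qed.

Lemma bin_le_central n i : 'C(n.*2, i) <= 'C(n.*2, n).
Proof.
have below k : k <= n -> 'C(n.*2, n - k) <= 'C(n.*2, n).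
  elim: k => [|k IHk] lt_kn; first by rewrite subn0.
  apply: leq_trans (IHk (ltnW lt_kn)).
  by rewrite (_ : n - k = (n - k.+1).+1); [apply: leq_binS | ]; lia.
have [le_in|lt_ni] := leqP i n.
  by have := below (n - i); rewrite subKn //; apply; lia.
have [le_i2n|lt_2ni] := leqP i n.*2; last by rewrite bin_small.
by rewrite -bin_sub // (_ : n.*2 - i = n - (i - n)); [apply: below | ]; lia.
Qed.

Lemma exp4_le_central_bin n : 4 ^ n <= n.*2.+1 * 'C(n.*2, n).
Proof.
have -> : 4 ^ n = \sum_(i < n.*2.+1) 'C(n.*2, i) * (1 ^ (n.*2 - i) * 1 ^ i).
  by rewrite -expnDn -mul2n expnM.
rewrite -[n.*2.+1 in X in _ <= X]card_ord -sum_nat_const.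
by apply: leq_sum => i _; rewrite !exp1n !muln1 bin_le_central.
Qed.

Lemma prime_dvd_fact p m : prime p -> (p %| m`!) = (p <= m).
Proof.
move=> p_pr; apply/idP/idP => [|le_pm]; last by rewrite dvdn_fact // prime_gt0.
elim: m => [|m IHm]; first by rewrite dvdn1 => /eqP p1; rewrite p1 in p_pr.
by rewrite factS Euclid_dvdM // => /orP[/dvdn_leq-> //| /IHm/leqW].
Qed.

Lemma dvdn_prod_primes a b N : 0 < N ->
  (forall p, a <= p < b -> prime p -> p %| N) ->
  \prod_(a <= p < b | prime p) p %| N.
Proof.
move=> N_gt0; elim: b => [|b IHb] dvdN; first by rewrite big_geq.
have [le_ab|lt_ba] := leqP a b; last by rewrite big_geq.
rewrite big_mkcond big_nat_recr //= -big_mkcond; case: ifP => [b_pr|_]; last first.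
  by rewrite muln1 IHb // => p /andP[le_ap lt_pb]; apply: dvdN; rewrite le_ap ltnW.
rewrite Gauss_dvd; last first.
  rewrite coprime_sym prime_coprime //; apply/negP.
  rewrite (Euclid_dvd_prod _ _ _ b_pr) big_has_cond => /hasP[c].
  rewrite mem_index_iota => /andP[_ lt_cb] /andP[c_pr].
  by rewrite dvdn_prime2 // => /eqP eq_bc; rewrite eq_bc ltnn in lt_cb.
apply/andP; split; last by apply: dvdN => //; rewrite le_ab /=.
by apply: IHb => p /andP[le_ap lt_pb]; apply: dvdN; rewrite le_ap ltnW.
Qed.

Lemma dvdn_prod_primes_bin k :
  \prod_(k.+2 <= p < k.*2.+2 | prime p) p %| 'C(k.*2.+1, k).
Proof.
apply: dvdn_prod_primes => [|p /andP[lt_kp le_p2k] p_pr]; first by rewrite bin_gt0; lia.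
have binE : 'C(k.*2.+1, k) * (k`! * k.+1`!) = k.*2.+1`!.
  by have := @bin_fact k.*2.+1 k; rewrite (_ : k.*2.+1 - k = k.+1); [apply; lia | lia].
have : p %| 'C(k.*2.+1, k) * (k`! * k.+1`!) by rewrite binE prime_dvd_fact //; lia.
rewrite Gauss_dvdl // prime_coprime // Euclid_dvdM // !prime_dvd_fact //.
by apply/norP; split; apply/negbT; lia.
Qed.

Definition primorial m := \prod_(0 <= p < m.+1 | prime p) p.

Lemma primorial_le_exp4 m : primorial m <= 4 ^ m.
Proof.
elim/ltn_ind: m => -[|[|[|m]]] IHm; rewrite /primorial; try by rewrite unlock.
have [m_odd|m_even] := boolP (odd m).
  rewrite big_mkcond big_nat_recr //= -big_mkcond ifN; last first.
    by apply/primePn; right; exists 2 => //; rewrite dvdn2 /= m_odd.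
  by rewrite muln1 (leq_trans (IHm m.+2 _)) // leq_exp2l.
pose k := m.+2./2.
have m3E : m.+3 = k.*2.+1 by rewrite /k -[in LHS](odd_double_half m.+2) /= (negbTE m_even).
rewrite m3E (big_cat_nat _ (n := k.+2)) //=; last by lia.
have le_bin : \prod_(k.+2 <= p < k.*2.+2 | prime p) p <= 4 ^ k.
  by apply: leq_trans (bin_odd_le_exp4 k); apply: dvdn_leq (dvdn_prod_primes_bin k); rewrite bin_gt0; lia.
apply: leq_trans (leq_mul (IHm k.+1 _) le_bin) _; first by lia.
by rewrite -expnD leq_exp2l //; lia.
Qed.

Lemma logn_fact_upto p m K : prime p -> m < K ->
  logn p m`! = \sum_(1 <= k < K) m %/ p ^ k.
Proof.
move=> p_pr lt_mK; rewrite logn_fact // (big_cat_nat _ (n := m.+1) (p := K)) //=.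
rewrite [X in _ + X]big1_seq ?addn0 // => k /andP[_]; rewrite mem_index_iota.
move=> /andP[lt_mk _]; apply: divn_small.
by apply: leq_trans (ltn_expl k (prime_gt1 p_pr)); lia.
Qed.

(* The k-th term of Legendre's formula for the exponent of p in 'C(2n, n). *)
Definition central_carry p n k := n.*2 %/ p ^ k - (n %/ p ^ k).*2.

Lemma central_carry_le1 p n k : 0 < p -> central_carry p n k <= 1.
Proof.
move=> p_gt0; rewrite /central_carry; have pk_gt0 : 0 < p ^ k by rewrite expn_gt0 p_gt0.
have : n.*2 %/ p ^ k < (n %/ p ^ k).*2.+2.
  by rewrite ltn_divLR // -doubleS -doubleMl ltn_double ltn_ceil.
lia.
Qed.

Lemma central_carry_eq0 p n k : n.*2 < p ^ k -> central_carry p n k = 0.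
Proof. by move=> lt_2n; rewrite /central_carry !divn_small //; lia. Qed.

Lemma logn_central_bin p n : prime p ->
  logn p 'C(n.*2, n) = \sum_(1 <= k < n.*2.+1) central_carry p n k.
Proof.
move=> p_pr; have p_gt0 := prime_gt0 p_pr.
have binE : 'C(n.*2, n) * (n`! * n`!) = (n.*2)`!.
  by have := @bin_fact n.*2 n; rewrite (_ : n.*2 - n = n); [apply; lia | lia].
have /(congr1 (logn p)) := binE.
rewrite !lognM ?muln_gt0 ?fact_gt0 ?bin_gt0 ?leq_double //; last by lia.
rewrite addnn (logn_fact_upto (K := n.*2.+1)) //; last by lia.
rewrite logn_fact // (big_morph double doubleD double0).
have -> : \sum_(1 <= k < n.*2.+1) n.*2 %/ p ^ k =
          \sum_(1 <= k < n.*2.+1) central_carry p n k + \sum_(1 <= k < n.*2.+1) (n %/ p ^ k).*2.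
  rewrite -big_split /=; apply: eq_bigr => k _; rewrite /central_carry subnK //.
  by rewrite leq_divRL ?expn_gt0 ?p_gt0 // -doubleMl leq_double leq_divM.
by move=> /eqP; rewrite eqn_add2r => /eqP.
Qed.

Lemma pfactor_central_bin_le p n : prime p -> 0 < n -> p ^ logn p 'C(n.*2, n) <= n.*2.
Proof.
move=> p_pr n_gt0; have p_gt0 := prime_gt0 p_pr; have p_gt1 := prime_gt1 p_pr.
pose t := trunc_log p n.*2.
have le_pt : p ^ t <= n.*2 by apply: trunc_logP; lia.
have lt_pt1 : n.*2 < p ^ t.+1 by apply: trunc_log_ltn.
have lt_t2n : t < n.*2.+1 by have := ltn_expl t p_gt1; lia.
apply: leq_trans le_pt; rewrite leq_pexp2l // logn_central_bin //.
rewrite (big_cat_nat _ (n := t.+1)) //= [X in _ + X]big1_seq ?addn0; last first.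
  move=> k /andP[_]; rewrite mem_index_iota => /andP[lt_tk _].
  by apply: central_carry_eq0; apply: leq_trans lt_pt1 _; rewrite leq_pexp2l.
apply: (@leq_trans (\sum_(1 <= k < t.+1) 1)); first by apply: leq_sum => k _; apply: central_carry_le1.
by rewrite sum_nat_const_nat muln1 subn1.
Qed.

Lemma logn_central_bin_eq0 p n : prime p -> 4 < n -> p <= n -> n.*2 < 3 * p ->
  logn p 'C(n.*2, n) = 0.
Proof.
move=> p_pr n_gt4 le_pn lt_2n3p; have p_gt0 := prime_gt0 p_pr.
have lt_2n_p2 : n.*2 < p ^ 2 by rewrite expnS expn1; nia.
rewrite logn_central_bin // big1_seq // => -[|[|k]] /andP[_]; rewrite mem_index_iota //.
  move=> _; rewrite /central_carry expn1.
  have -> : n %/ p = 1 by apply/eqP; rewrite eqn_leq -ltnS ltn_divLR // leq_divRL //; lia.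
  have -> : n.*2 %/ p = 2 by apply/eqP; rewrite eqn_leq -ltnS ltn_divLR // leq_divRL //; lia.
  by [].
by move=> _; apply: central_carry_eq0; apply: leq_trans lt_2n_p2 _; rewrite leq_pexp2l.
Qed.

Lemma central_bin_prod n : 0 < n ->
  'C(n.*2, n) = \prod_(0 <= p < n.*2.+1) p ^ logn p 'C(n.*2, n).
Proof.
move=> n_gt0; set C := 'C(n.*2, n); have C_gt0 : 0 < C by rewrite bin_gt0; lia.
rewrite -{1}(partnT C_gt0) (widen_partn _ (m := C + n.*2)) ?leq_addr //.
rewrite (big_cat_nat _ (n := n.*2.+1)) //=; last by lia.
rewrite [X in _ * X]big1_seq ?muln1; last first.
  move=> p /andP[_]; rewrite mem_index_iota => /andP[lt_2np _].
  have [->|logn_gt0] := posnP (logn p C); first by [].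
  have p_pr : prime p by move: logn_gt0; rewrite logn_gt0 mem_primes => /andP[].
  have := pfactor_central_bin_le p_pr n_gt0; rewrite -/C.
  have : p ^ 1 <= p ^ logn p C by rewrite leq_pexp2l // prime_gt0.
  rewrite expn1; lia.
by apply: eq_bigl.
Qed.

Section NoPrimeBetween.

Variable n : nat.
Hypothesis n_gt4 : 4 < n.
Hypothesis no_prime : forall p, prime p -> n < p -> n.*2 < p.

Let small p := if p * p <= n.*2 then n.*2 else 1.
Let medium p := if prime p && (3 * p <= n.*2) then p else 1.

Lemma pfactor_central_bin_le_no_prime p :
  p ^ logn p 'C(n.*2, n) <= small p * medium p.
Proof.
rewrite /small /medium /=; have [p_pr|p_npr] := boolP (prime p); last first.
  rewrite (_ : logn p _ = 0) ?(negbTE p_npr) ?muln1; last by rewrite /logn (negbTE p_npr).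
  by case: ifP; lia.
have p_gt0 := prime_gt0 p_pr.
have le_2n : p ^ logn p 'C(n.*2, n) <= n.*2 by apply: pfactor_central_bin_le; lia.
have [le_p2_2n|lt_2n_p2] := leqP (p * p) n.*2.
  by rewrite -[X in X <= _]muln1 leq_mul //; case: ifP.
have logn_le1 : logn p 'C(n.*2, n) <= 1.
  by rewrite -ltnS -(ltn_exp2l _ _ (prime_gt1 p_pr)) (leq_ltn_trans le_2n) // expnS expn1.
rewrite mul1n /=.
case: ifP => [_|/negbT]; first by rewrite (leq_trans (leq_pexp2l p_gt0 logn_le1)) ?expn1.
rewrite -ltnNge => lt_2n_3p; have [le_pn|lt_np] := leqP p n.
  by rewrite logn_central_bin_eq0.
have : p ^ logn p 'C(n.*2, n) < p ^ 1.
  by rewrite expn1 (leq_ltn_trans le_2n) // no_prime.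
by rewrite ltn_exp2l ?prime_gt1 // ltnS leqn0 => /eqP ->.
Qed.

Lemma central_bin_le_no_prime u : n.*2 < u * u -> u <= n.*2.+1 ->
  'C(n.*2, n) <= (n.*2) ^ u * 4 ^ (n.*2 %/ 3).
Proof.
move=> lt_2n_u2 le_u_2n.
have le_prod : 'C(n.*2, n) <=
    \prod_(0 <= p < n.*2.+1) small p * \prod_(0 <= p < n.*2.+1) medium p.
  rewrite {1}central_bin_prod; last by lia.
  rewrite -big_split /= big_nat_cond [X in _ <= X]big_nat_cond.
  by apply: leq_prod => p _; apply: pfactor_central_bin_le_no_prime.
apply: leq_trans le_prod _; apply: leq_mul.
  rewrite (big_cat_nat _ (n := u)) //= [X in _ * X]big1_seq ?muln1; last first.
    move=> p /andP[_]; rewrite mem_index_iota => /andP[le_up _].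
    by rewrite /small ifF //; apply/negbTE; rewrite -ltnNge (leq_trans lt_2n_u2) // leq_mul.
  rewrite -{2}(subn0 u) -prod_nat_const_nat; apply: leq_prod => p _.
  by rewrite /small; case: ifP; lia.
pose w := n.*2 %/ 3.
rewrite (big_cat_nat _ (n := w.+1)) //= ?ltnS ?leq_div //.
rewrite [X in _ * X]big1_seq ?muln1; last first.
  move=> p /andP[_]; rewrite mem_index_iota => /andP[lt_wp _].
  rewrite /medium; case: ifP => // /andP[_ le_3p_2n].
  by move: lt_wp; rewrite ltnNge /w leq_divRL // mulnC le_3p_2n.
apply: leq_trans (primorial_le_exp4 w); rewrite /primorial [X in _ <= X]big_mkcond /=.
apply: leq_prod => p _; rewrite /medium; case p_pr: (prime p) => //=.
by case: ifP => // _; apply: prime_gt0.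
Qed.

End NoPrimeBetween.

(* Landau's trick: a chain of primes, each less than twice its predecessor. *)
Lemma bertrand_chain (s : seq nat) a :
  path (fun p p' => p' <= p.*2) a s -> all prime s ->
  forall n, a <= n < last a s -> exists2 p, prime p & n < p <= n.*2.
Proof.
elim: s a => [|b s IHs] a /=; first by move=> _ _ n; lia.
move=> /andP[le_b_2a chain_s] /andP[b_pr s_pr] n /andP[le_an lt_n_last].
have [lt_nb|le_bn] := ltnP n b; first by exists b => //; rewrite lt_nb; lia.
by apply: (IHs b chain_s s_pr); rewrite le_bn.
Qed.

Lemma bertrand_small n : 0 < n < 8209 -> exists2 p, prime p & n < p <= n.*2.
Proof.
apply: (@bertrand_chain
  [:: 2; 3; 5; 7; 13; 23; 43; 83; 163; 317; 631; 1259; 2503; 5003; 8209]);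
  by vm_compute.
Qed.

Lemma exp2_ge_mul32 s : 8 <= s -> 32 * s <= 2 ^ s.
Proof.
elim: s => [|s IHs] // le_8s; have [lt_s8|] := ltnP s 8.
  by rewrite (_ : s = 7) //; lia.
by move=> /IHs; rewrite expnS; lia.
Qed.

(* u = 2^s with 4^(s-1) <= 2n < 4^s; the bound 32 s <= u, valid for s >= 8, is what
   requires n >= 2^13. *)
Lemma bertrand_estimate n : 2 ^ 13 <= n ->
  exists u, [/\ n.*2 < u * u, u <= n.*2.+1 &
                n.*2.+1 * ((n.*2) ^ u * 4 ^ (n.*2 %/ 3)) < 4 ^ n].
Proof.
move=> le_n; pose j := trunc_log 4 n.*2; pose s := j.+1; pose u := 2 ^ s.
have le_4j : 4 ^ j <= n.*2 by apply: trunc_logP; lia.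
have lt_4s : n.*2 < 4 ^ s by apply: trunc_log_ltn.
have le_7j : 7 <= j by apply: trunc_log_max => //; lia.
have exp4E k : 4 ^ k = 2 ^ k.*2 by rewrite -mul2n expnM.
have u2E : u * u = 2 ^ s.*2 by rewrite -expnD addnn.
have le_u2 : u * u <= 4 * n.*2 by rewrite u2E -exp4E expnS leq_mul2l le_4j orbT.
have le_32s : 32 * s <= u by apply: exp2_ge_mul32; lia.
exists u; split; [by rewrite u2E -exp4E | nia |].
have le_3w : (n.*2 %/ 3) * 3 <= n.*2 by apply: leq_divM.
apply: (@leq_ltn_trans (u * u * ((u * u) ^ u * 4 ^ (n.*2 %/ 3)))).
  apply: leq_mul; first by rewrite u2E -exp4E.
  by apply: leq_mul => //; rewrite leq_exp2r ?expn_gt0 // ltnW // u2E -exp4E.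
rewrite u2E -expnM !exp4E -!expnD ltn_exp2l //; nia.
Qed.

Lemma bertrand n : 0 < n -> exists2 p, prime p & n < p <= n.*2.
Proof.
move=> n_gt0; have [lt_n|le_n] := ltnP n (2 ^ 13).
  by apply: bertrand_small; rewrite n_gt0 (leq_trans lt_n).
have [p /andP[p_pr lt_np] | no_prime] := pickP (fun p : 'I_(n.*2.+1) => prime p && (n < p)).
  by exists p => //; rewrite lt_np -ltnS ltn_ord.
have {}no_prime p : prime p -> n < p -> n.*2 < p.
  move=> p_pr lt_np; rewrite ltnNge; apply/negP => le_p2n.
  by have := no_prime (Ordinal (le_p2n : p < n.*2.+1)); rewrite /= p_pr lt_np.
have [u [lt_2n_u2 le_u lt_4n]] := bertrand_estimate le_n.
have n_gt4 : 4 < n by lia.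
have le_bin := central_bin_le_no_prime n_gt4 no_prime lt_2n_u2 le_u.
have le_4n := leq_trans (exp4_le_central_bin n) (leq_mul (leqnn _) le_bin).
by have := leq_ltn_trans le_4n lt_4n; rewrite ltnn.
Qed.

(** * Minimum distance *)

Section Moments.
Local Open Scope ring_scope.

(* If e i0 != 0, the polynomial of degree < k vanishing on the rest of the support
   isolates the i0-th term of the moment relations. *)
Lemma moments_eq0_small_support (F : fieldType) (I : finType) (z e : I -> F) k :
  (forall j, (j < k)%N -> \sum_i z i ^+ j * e i = 0) ->
  {in support e &, injective z} -> (#|support e| <= k)%N ->
  forall i, e i = 0.
Proof.
move=> moments_eq0 z_inj supp_le i0; apply/eqP; apply: contraT => e_i0.
set S := support e in z_inj supp_le.
pose f := \prod_(c <- [seq z i | i <- enum [predD1 S & i0]]) ('X - c%:P) : {poly F}.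
have f_size : (size f <= k)%N.
  rewrite size_prod_XsubC size_map -cardE (leq_trans _ supp_le) // (cardD1 i0 S).
  by rewrite [i0 \in S]inE e_i0.
have f_moment : \sum_i f.[z i] * e i = 0.
  under eq_bigr => i _ do rewrite horner_coef mulr_suml.
  rewrite exchange_big /= big1 // => j _.
  under eq_bigr => i _ do rewrite -mulrA.
  by rewrite -mulr_sumr moments_eq0 ?mulr0 // (leq_trans _ f_size).
move: f_moment; rewrite (bigD1 i0) //= big1 ?addr0 => [/eqP|i ne_i_i0]; last first.
  have [S_i|] := boolP (i \in S); last by rewrite !inE negbK => /eqP->; rewrite mulr0.
  apply/eqP; rewrite mulf_eq0 -/(root f _) root_prod_XsubC; apply/orP; left.
  by apply: map_f; rewrite mem_enum !inE ne_i_i0.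
rewrite mulf_eq0 (negbTE e_i0) orbF -/(root f _) root_prod_XsubC.
move=> /mapP[i]; rewrite mem_enum => /andP[ne_i_i0 S_i] eq_z.
by move: ne_i_i0; rewrite -(z_inj i0 i) ?eqxx.
Qed.

End Moments.

Lemma eq_modn_close a b c m :
  a = b %[mod m] -> a <= b + c -> b <= a + c -> c < m -> a = b.
Proof.
wlog le_ab : a b / a <= b => [hwlog|].
  by have [/hwlog//|/ltnW/hwlog h ? ? ? ?] := leqP a b; apply/esym/h.
move=> eq_mod _ le_b lt_cm; apply/eqP; rewrite eqn_leq le_ab /=.
have [//|lt_ab] := leqP b a.
have := dvdn_leq (_ : 0 < b - a) (_ : m %| b - a); rewrite -?eqn_mod_dvd ?eq_mod //; lia.
Qed.

Lemma VT0_le_dH q n (x y : word q n) : VT 0 x <= VT 0 y + dH x y * (q - 1).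
Proof.
rewrite /VT /dH -sum1_card big_distrl /= [X in _ + X]big_mkcond /= -big_split /=.
apply: leq_sum => i _; rewrite !mul1n inE.
by case: eqP => [->|_] /=; [rewrite addn0 | have := ltn_ord (x i); lia].
Qed.

Lemma diff_span_ge q n (x y : word q n) (i j : 'I_n) :
  x i != y i -> x j != y j -> i - j <= diff_span x y.
Proof.
move=> ne_i ne_j; apply: leq_sub; first exact: (leq_bigmax_cond (F := val) i ne_i).
by rewrite -minEnat; exact: (Order.TotalTheory.bigmin_le_cond n val ne_j).
Qed.

Lemma eq_Fp_nat p a b : prime p -> ((a%:R : 'F_p) == b%:R)%R = (a == b %[mod p]).
Proof. by move=> p_pr; rewrite -val_eqE /= !val_Fp_nat. Qed.

(* [VT] and [redundancy] are stated with Stdlib's [Nat.pow], not with [expn]. *)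
Lemma natpowE m k : Nat.pow m k = m ^ k.
Proof. by elim: k => // k IHk; rewrite expnS -IHk. Qed.

Lemma dH_sym q n (x y : word q n) : dH x y = dH y x.
Proof. by apply: eq_card => i; rewrite !inE eq_sym. Qed.

Lemma code_dH_ge q d p n a (x y : word q n) : prime p -> q <= p ->
  x \in code q d p n a -> y \in code q d p n a -> x != y ->
  diff_span x y < p -> d <= dH x y.
Proof.
move=> p_pr le_qp; rewrite !inE => /forallP x_code /forallP y_code ne_xy lt_span.
rewrite leqNgt; apply/negP => lt_dH.
have VT_cong k : k < d - 1 -> VT k x = VT k y %[mod modulus q d p k].
  by move=> lt_kd; move: (x_code (Ordinal lt_kd)) (y_code (Ordinal lt_kd)) => /eqP-> /eqP->.
pose z (i : 'I_n) : 'F_p := (i.+1)%:R%R.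
pose e (i : 'I_n) : 'F_p := ((x i : nat)%:R - (y i : nat)%:R)%R.
have e_eq0 i : (e i == 0)%R = (x i == y i).
  by rewrite subr_eq0 eq_Fp_nat // !modn_small ?(leq_trans (ltn_ord _) le_qp).
have moments j : j < d - 1 -> (\sum_i z i ^+ j * e i = 0)%R.
  move=> lt_jd; have -> : (\sum_i z i ^+ j * e i = (VT j x)%:R - (VT j y)%:R)%R.
    rewrite /VT !natr_sum -sumrB; apply: eq_bigr => i _.
    by rewrite /z /e -natrX mulrBr -!natrM natpowE.
  apply/eqP; rewrite subr_eq0 eq_Fp_nat //.
  case: j lt_jd => [|j] lt_jd; last exact/eqP/(VT_cong _ lt_jd).
  suff -> : VT 0 x = VT 0 y by [].
  apply: (eq_modn_close (VT_cong 0 lt_jd) (VT0_le_dH x y)); first by rewrite dH_sym VT0_le_dH.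
  by rewrite /modulus /= addn1 ltnS leq_mul2r; apply/orP; right; lia.
have z_inj : {in support e &, injective z}.
  move=> i j; rewrite !inE !e_eq0 => ne_i ne_j /eqP; rewrite eq_Fp_nat // => /eqP eq_ij.
  apply/val_inj/succn_inj/(eq_modn_close (c := diff_span x y) eq_ij) => //.
    by have := diff_span_ge ne_i ne_j; lia.
  by have := diff_span_ge ne_j ne_i; lia.
have supp_le : #|support e| <= d - 1.
  rewrite (eq_card (B := [set i | x i != y i])) => [|i]; last by rewrite !inE e_eq0.
  by rewrite /dH in lt_dH; lia.
have e_eq0_all := moments_eq0_small_support moments z_inj supp_le.
by move/eqP: ne_xy; apply; apply/ffunP => i; apply/eqP; rewrite -e_eq0 e_eq0_all.
Qed.

(** * Redundancy *)

Lemma exists_large_fiber (T U : finType) (f : T -> U) (x0 : T) :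
  exists x, #|T| <= #|U| * #|[set y | f y == f x]|.
Proof.
have U_gt0 : 0 < #|U| by apply/card_gt0P; exists (f x0).
have [u0 _ max_u0] := eq_bigmax_cond (fun u => #|[set y | f y == u]|) U_gt0.
have card_T : #|T| = \sum_(u : U) #|[set y | f y == u]|.
  rewrite -sum1_card (partition_big f predT) //=.
  by apply: eq_bigr => u _; rewrite -sum1_card; apply: eq_bigl => y; rewrite inE.
have le_T : #|T| <= #|U| * #|[set y | f y == u0]|.
  rewrite card_T -max_u0 -sum_nat_const; apply: leq_sum => v _.
  exact: (leq_bigmax (F := fun u => #|[set y | f y == u]|) v).
case: (set_0Vmem [set y | f y == u0]) => [fiber0 | [y]].
  by exists x0; move: le_T; rewrite fiber0 cards0 muln0 leqn0 => /eqP ->.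
by rewrite inE => /eqP fy_u0; exists y; rewrite fy_u0.
Qed.

Lemma code_card_lb q d p n : 0 < q -> 0 < p ->
  exists a : nat -> nat,
    [/\ a 0 < (d - 1) * (q - 1) + 1,
        (forall i, 1 <= i <= d - 2 -> a i < p) &
        q ^ n <= ((d - 1) * (q - 1) + 1) * p ^ (d - 2) * #|code q d p n a|].
Proof.
move=> q_gt0 p_gt0; have p0_gt0 : 0 < (d - 1) * (q - 1) + 1 by rewrite addn1.
pose res (x : word q n) : 'I_((d - 1) * (q - 1) + 1) * {ffun 'I_(d - 2) -> 'I_p} :=
  (Ordinal (ltn_pmod (VT 0 x) p0_gt0), [ffun k : 'I_(d - 2) => Ordinal (ltn_pmod (VT k.+1 x) p_gt0)]).
have [x0 le_fiber] := exists_large_fiber res [ffun => Ordinal q_gt0].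
exists (fun i => VT i x0 %% modulus q d p i); split => [|[|i] //|].
- exact: ltn_pmod.
- by move=> _; apply: ltn_pmod.
have fiber_sub : [set y | res y == res x0] \subset code q d p n (fun i => VT i x0 %% modulus q d p i).
  apply/subsetP => y; rewrite !inE /res => /eqP [VT0_eq /ffunP VT_eq].
  apply/forallP => -[[|k] lt_kd]; rewrite /= modn_mod /modulus /=; first exact/eqP.
  have lt_k : k < d - 2 by lia.
  by move/(congr1 val): (VT_eq (Ordinal lt_k)); rewrite !ffunE /= => ->.
have card_words : #|{: word q n}| = q ^ n by rewrite card_ffun !card_ord.
rewrite -card_words (leq_trans le_fiber) //.
by rewrite card_prod card_ffun !card_ord leq_mul2l subset_leq_card ?orbT.
Qed.

Section Logarithms.
Local Open Scope R_scope.

Lemma INR_pos k : (0 < k)%N -> 0 < INR k.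
Proof. by move=> k_gt0; apply/lt_0_INR/ltP. Qed.

Lemma ln_le x y : 0 < x -> x <= y -> ln x <= ln y.
Proof.
move=> x_gt0 /Rle_lt_or_eq_dec[lt_xy | <-]; last exact: Rle_refl.
exact/Rlt_le/ln_increasing.
Qed.

Lemma logb_mult b x y : 0 < x -> 0 < y -> logb b (x * y) = logb b x + logb b y.
Proof. by move=> x_gt0 y_gt0; rewrite /logb ln_mult // /Rdiv Rmult_plus_distr_r. Qed.

Lemma logb_pow b x k : 0 < x -> logb b (x ^ k) = INR k * logb b x.
Proof. by move=> x_gt0; rewrite /logb ln_pow // /Rdiv Rmult_assoc. Qed.

Lemma redundancy_le_logb q n (C : {set word q n}) K : (2 <= q)%N ->
  (q ^ n <= K * #|C|)%N -> redundancy q n C <= logb (INR q) (INR K).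
Proof.
move=> le2q le_qn.
have qn_gt0 : (0 < q ^ n)%N by rewrite expn_gt0; lia.
have [K_gt0 C_gt0] : (0 < K)%N /\ (0 < #|C|)%N.
  by move: (leq_trans qn_gt0 le_qn); rewrite muln_gt0 => /andP.
have lnq_gt0 : 0 < ln (INR q).
  by rewrite -ln_1; apply: ln_increasing; [lra | apply/lt_1_INR/ltP].
have le_ln : INR n * ln (INR q) <= ln (INR K) + ln (INR #|C|).
  rewrite -ln_pow; last by apply: INR_pos; lia.
  rewrite -ln_mult; try by apply: INR_pos.
  rewrite -pow_INR -mult_INR natpowE.
  by apply: ln_le; [apply: INR_pos | apply/le_INR/leP].
rewrite /redundancy /logb; apply: (Rmult_le_reg_r (ln (INR q))) => //.
have lnq_neq0 : ln (INR q) <> 0 by lra.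
rewrite Rmult_minus_distr_r /Rdiv !Rmult_assoc Rinv_l // !Rmult_1_r; lra.
Qed.

End Logarithms.

Theorem theorem7 (q d P n p : nat)
  (hq : 2 <= q) (hd : 2 <= d) (hP : 1 <= P) (hn : 1 <= n)
  (hp : prime p) (hpge : maxn P q <= p)
  (hpmin : forall p' : nat, prime p' -> maxn P q <= p' -> p <= p') :
  (forall a : nat -> nat,
     a 0 < (d - 1) * (q - 1) + 1 ->
     (forall i, 1 <= i <= d - 2 -> a i < p) ->
     forall x y : word q n,
       x \in code q d p n a -> y \in code q d p n a -> x != y ->
       diff_span x y < P -> d <= dH x y)
  /\
  (exists a : nat -> nat,
     [/\ a 0 < (d - 1) * (q - 1) + 1,
         (forall i, 1 <= i <= d - 2 -> a i < p),
         0 < #|code q d p n a| &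
         Rle (redundancy q n (code q d p n a))
            (Rplus (Rmult (INR (d - 2)) (logb (INR q) (Rmult (INR 2) (INR (maxn P q)))))
                   (logb (INR q) (INR ((d - 1) * (q - 1) + 1))))]).
Proof.
have [le_Pp le_qp] : P <= p /\ q <= p by apply/andP; rewrite -geq_max.
split=> [a _ _ x y x_code y_code ne_xy lt_span|].
  exact: code_dH_ge hp le_qp x_code y_code ne_xy (leq_trans lt_span le_Pp).
pose m := maxn P q; have m_gt0 : 0 < m by rewrite leq_max hP.
have [r r_pr /andP[lt_mr le_r2m]] := bertrand m_gt0.
have le_p2m : p <= m.*2 := leq_trans (hpmin r r_pr (ltnW lt_mr)) le_r2m.
have [a [a0_lt ai_lt card_lb]] := code_card_lb d n (ltnW hq) (prime_gt0 hp).
have {}card_lb : q ^ n <= ((d - 1) * (q - 1) + 1) * m.*2 ^ (d - 2) * #|code q d p n a|.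
  apply: leq_trans card_lb _; rewrite leq_mul2r leq_mul2l; apply/orP; right; apply/orP; right.
  by case: (d - 2) => [//|e]; rewrite leq_exp2r.
have qn_gt0 : 0 < q ^ n by rewrite expn_gt0 (leq_trans _ hq).
exists a; split=> //; first by move: (leq_trans qn_gt0 card_lb); rewrite muln_gt0 => /andP[].
apply: Rle_trans (redundancy_le_logb hq card_lb) _.
have two_m_gt0 := Rmult_lt_0_compat _ _ (INR_pos (isT : 0 < 2)) (INR_pos m_gt0).
rewrite mult_INR -natpowE pow_INR logb_mult ?logb_pow -?mul2n ?mult_INR.
- by rewrite Rplus_comm; apply: Rle_refl.
- exact: two_m_gt0.
- by apply: INR_pos; rewrite addn1.
- exact: pow_lt.
Qed.
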